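(* If $T$ is a tree of order $n\ge 3$ that is not isomorphic to the path $P_4$, then $\gamma^{\rm ID}(T) \le n - \gamma(T)$.
   Context: An identifying code of a graph $G$ is a set $C\subseteq V(G)$ such that every vertex $v$ has $N[v]\cap C\neq\emptyset$ and for all distinct vertices $u,v$, $N[u]\cap C \ne N[v]\cap C$, where $N[v]$ is the closed neighborhood. $\gamma^{\rm ID}(G)$ denotes the minimum size of an identifying code, and $\gamma(G)$ the domination number. *)

From mathcomp Require Import all_boot all_order.
Set Implicit Arguments. Unset Strict Implicit. Unset Printing Implicit Defensive.

Definition simple_graph (T : finType) (e : rel T) : Prop :=
  symmetric e /\ irreflexive e.

Definition cnbhd (T : finType) (e : rel T) (v : T) : {set T} :=
  [set u | (u == v) || e v u].

Definition nedges (T : finType) (e : rel T) : nat :=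
  #|[set p : T * T | e p.1 p.2]| %/ 2.

Definition connected_graph (T : finType) (e : rel T) : Prop :=
  forall x y : T, connect e x y.

Definition is_tree (T : finType) (e : rel T) : Prop :=
  simple_graph e /\ 0 < #|T| /\ connected_graph e /\ nedges e = #|T| - 1.

Definition iso_P4 (T : finType) (e : rel T) : Prop :=
  exists f : T -> 'I_4, bijective f /\
    forall x y, e x y = ((f x).+1 == f y) || ((f y).+1 == f x).

Definition dominating (T : finType) (e : rel T) (S : {set T}) : bool :=
  [forall v, cnbhd e v :&: S != set0].

Definition identifying (T : finType) (e : rel T) (C : {set T}) : bool :=
  dominating e C &&
  [forall u, forall v, (u != v) ==> (cnbhd e u :&: C != cnbhd e v :&: C)].

(* domination number: minimum size of a dominating set (setT always dominates) *)
Definition gamma (T : finType) (e : rel T) : nat :=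
  #|[arg min_(S < setT | dominating e S) #|S|]|.

(* identifying code number: minimum size of an identifying code;
   only meaningful when an identifying code exists (0 otherwise). *)
Definition has_idcode (T : finType) (e : rel T) : bool :=
  [exists C : {set T}, identifying e C].

Definition gammaID (T : finType) (e : rel T) : nat :=
  match [pick C : {set T} | identifying e C] with
  | Some C0 => #|[arg min_(C < C0 | identifying e C) #|C|]|
  | None => 0
  end.

From mathcomp Require Import all_boot all_order.
From mathcomp Require Import zify.
Set Implicit Arguments. Unset Strict Implicit. Unset Printing Implicit Defensive.

(* Root the tree and build it up from single vertices, attaching rooted
   subtrees one at a time below the root of a growing piece.  For a pair
   (C, D) on a piece rooted at u in which every vertex other than u is already
   dominated by D and identified by C, the way the pair extends depends only on
   a bounded profile of u.  Recording, for each piece, which profiles are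
   realizable and with which excess |C| + |D| - |S| turns the problem into a
   finite computation: a certificate listing families of realizable profiles,
   indexed by a coarse shape of the piece, is closed under attaching, and for
   every tree with at least 3 vertices other than P_4, rooted at a vertex of
   maximum degree, its family contains an identifying code C and a dominating
   set D with |C| + |D| <= n.  Hence gammaID + gamma <= n. *)

(* A profile [(uC, uD, dom, k, twin, single)] of a pair (C, D) on a piece
   rooted at u records: u \in C, u \in D, whether N[u] meets D, the kind k of
   N[u] :&: C (0 if empty, 1 if it is [set u], 2 otherwise), whether another
   vertex of the piece has the same C-code as u, and whether another vertex
   has C-code [set u]. *)
Definition profile := (bool * bool * bool * nat * bool * bool)%type.

(* The profile obtained by attaching a piece rooted at c (profile [s2]) to the
   root u of a piece (profile [s1]) through the edge uc; [None] when c would be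
   left undominated, with an empty code, or with the code of another vertex. *)
Definition glue_profile (s1 s2 : profile) : option profile :=
  let: (c1, d1, dm1, k1, tw1, si1) := s1 in
  let: (c2, d2, dm2, k2, tw2, si2) := s2 in
  if ~~ (dm2 || d1) then None else
  if ~~ ((k2 != 0) || c1) then None else
  if ~~ c1 && tw2 then None else
  if [&& k2 == 0, c1 & si1] then None else
  Some (c1, d1, dm1 || d2, (if c2 then 2 else k1),
       (if c2 then [|| (k1 == 0) && (k2 == 1), (k1 == 1) && (k2 == 1) | (k1 == 0) && si2]
        else tw1 || [&& k1 == 1, k2 == 0 & c1]),
       si1 || (c1 && (k2 == 0))).

Definition shape (size nsub : nat) : nat * nat :=
  if 5 <= size then (5, 0) else (size, minn nsub 3).

Definition glue_shape (t1 t2 : nat * nat) : nat * nat := shape (t1.1 + t2.1) t1.2.+1.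

Lemma shape_glue s1 s2 k1 k2 : 0 < s1 -> 0 < s2 ->
  shape (s1 + s2) k1.+1 = glue_shape (shape s1 k1) (shape s2 k2).
Proof.
rewrite /glue_shape /shape => s1_gt0 s2_gt0.
case: (leqP 5 s1) => s1_5; case: (leqP 5 s2) => s2_5; case: (leqP 5 (s1 + s2)) => s_5 /=.
all: try lia; try done.
- by rewrite ifT //; lia.
- by congr pair; lia.
Qed.

(* A family is a list of pairs (s, b): a piece S rooted at u is meant to carry,
   for each of them, a pair (C, D) of profile s with |C| + |D| + 1 <= |S| + b. *)
Definition family := seq (profile * nat).

Definition glue_covers (g g1 g2 : family) : bool :=
  all (fun p => has (fun p1 => has (fun p2 =>
        (glue_profile p1.1 p2.1 == Some p.1) && (p1.2 + p2.2 <= p.2 + 1)) g2) g1) g.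

Definition singleton_family : family :=
  [:: ((false,false,false,0,false,false),0); ((false,true,true,0,false,false),1);
      ((true,false,false,1,false,false),1); ((true,true,true,1,false,false),2)].

Definition certificate : seq (nat * nat * family) := (1, 0, singleton_family) :: [::
  (2,1,[:: ((false,true,true,2,true,false),1); ((true,false,true,1,true,true),1); ((true,false,true,2,true,false),2); ((true,true,true,1,true,true),1); ((true,true,true,2,true,false),2)]);
  (3,1,[:: ((true,false,false,2,false,false),2); ((true,false,true,1,false,false),1); ((true,false,true,2,false,false),2); ((true,false,true,2,true,false),1); ((true,true,true,1,false,false),2); ((true,true,true,2,false,false),3); ((true,true,true,2,true,false),2)]);
  (3,2,[:: ((false,true,true,2,false,false),1); ((true,false,true,2,false,false),3); ((true,true,true,2,false,false),2); ((true,true,true,2,true,true),1)]);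
  (4,2,[:: ((true,false,true,1,true,true),1); ((true,false,true,2,false,false),2); ((true,false,true,2,false,true),2); ((true,false,true,2,true,false),2); ((true,true,true,1,true,true),1); ((true,true,true,2,false,false),2); ((true,true,true,2,false,true),2); ((true,true,true,2,true,false),2); ((true,true,true,2,true,true),1)]);
  (5,0,[:: ((false,true,true,2,false,false),1); ((true,false,true,2,false,false),2); ((true,false,true,2,false,true),1); ((true,true,true,2,false,false),2); ((true,true,true,2,false,true),1); ((true,true,true,2,true,true),1)]);
  (4,1,[:: ((false,false,false,2,false,false),1); ((false,false,false,2,true,false),0); ((false,false,true,2,false,false),2); ((false,true,true,2,false,false),2); ((false,true,true,2,true,false),1); ((true,false,false,2,false,false),1); ((true,false,true,2,false,false),2); ((true,false,true,2,true,false),2); ((true,true,true,2,false,false),2); ((true,true,true,2,true,false),2)]);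
  (4,1,[:: ((false,false,false,2,false,false),2); ((false,false,true,0,false,false),0); ((false,false,true,2,false,false),1); ((false,true,true,0,false,false),1); ((false,true,true,2,false,false),2); ((true,false,false,2,false,false),3); ((true,false,true,1,false,false),1); ((true,false,true,2,false,false),1); ((true,true,true,1,false,false),2); ((true,true,true,2,false,false),2)]);
  (5,0,[:: ((false,false,false,2,false,false),1); ((false,false,false,2,true,false),1); ((false,false,true,2,false,false),1); ((false,true,true,2,false,false),2); ((false,true,true,2,true,false),2); ((true,false,false,2,false,false),2); ((true,false,true,2,false,false),1); ((true,false,true,2,true,false),1); ((true,true,true,2,false,false),2); ((true,true,true,2,true,false),2)]);
  (5,0,[:: ((false,false,false,2,false,false),1); ((false,false,false,2,true,false),0); ((false,false,true,0,false,false),0); ((false,false,true,2,false,false),1); ((false,true,true,0,false,false),1); ((false,true,true,2,false,false),2); ((false,true,true,2,true,false),1); ((true,false,false,2,false,false),1); ((true,false,true,1,false,false),1); ((true,false,true,2,false,false),1); ((true,true,true,1,false,false),2); ((true,true,true,2,false,false),2)]);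
  (5,0,[:: ((false,true,true,2,false,false),2); ((false,true,true,2,true,false),1); ((true,false,true,1,true,true),1); ((true,false,true,2,false,false),2); ((true,false,true,2,false,true),1); ((true,false,true,2,true,false),2); ((true,true,true,1,true,true),1); ((true,true,true,2,false,false),2); ((true,true,true,2,false,true),1); ((true,true,true,2,true,false),2)]);
  (5,0,[:: ((false,true,true,2,false,false),2); ((true,false,true,2,false,false),2); ((true,false,true,2,false,true),1); ((true,true,true,2,false,false),2); ((true,true,true,2,false,true),1); ((true,true,true,2,true,true),1)]);
  (5,0,[:: ((false,true,true,2,false,false),1); ((false,true,true,2,true,false),1); ((true,false,true,1,true,true),1); ((true,false,true,2,false,false),3); ((true,false,true,2,false,true),2); ((true,false,true,2,true,false),2); ((true,true,true,1,true,true),0); ((true,true,true,2,false,false),2); ((true,true,true,2,false,true),1); ((true,true,true,2,true,false),1)]);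
  (5,0,[:: ((true,false,false,2,false,false),2); ((true,false,true,1,false,false),1); ((true,false,true,2,false,false),1); ((true,false,true,2,true,false),1); ((true,true,true,1,false,false),2); ((true,true,true,2,false,false),2); ((true,true,true,2,true,false),2)]);
  (5,0,[:: ((true,false,false,2,false,false),2); ((true,false,true,2,false,false),1); ((true,false,true,2,true,false),1); ((true,true,true,2,false,false),2); ((true,true,true,2,true,false),2)]);
  (5,0,[:: ((true,false,true,1,false,false),1); ((true,false,true,2,false,false),1); ((true,false,true,2,true,false),1); ((true,true,true,1,false,false),2); ((true,true,true,2,false,false),2); ((true,true,true,2,true,false),2)]);
  (5,0,[:: ((true,false,false,2,false,false),3); ((true,false,true,1,false,false),1); ((true,false,true,2,false,false),2); ((true,false,true,2,true,false),1); ((true,true,true,1,false,false),1); ((true,true,true,2,false,false),2); ((true,true,true,2,true,false),1)]);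
  (5,0,[:: ((true,false,false,2,false,false),2); ((true,false,true,1,false,false),2); ((true,false,true,2,false,false),1); ((true,false,true,2,true,false),2); ((true,true,true,1,false,false),3); ((true,true,true,2,false,false),2); ((true,true,true,2,true,false),3)]);
  (4,3,[:: ((false,true,true,2,false,false),1); ((true,false,true,2,false,true),3); ((true,true,true,2,false,false),2); ((true,true,true,2,false,true),1)]);
  (5,0,[:: ((true,false,true,2,false,false),3); ((true,true,true,2,false,false),2); ((true,true,true,2,false,true),1); ((true,true,true,2,true,true),1)]);
  (5,0,[:: ((false,true,true,2,false,false),1); ((true,false,true,2,false,false),3); ((true,true,true,2,false,false),2); ((true,true,true,2,false,true),1)]);
  (5,0,[:: ((false,true,true,2,false,false),2); ((true,false,true,2,false,false),3); ((true,true,true,2,false,false),2); ((true,true,true,2,false,true),1)]);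
  (5,0,[:: ((true,false,true,1,true,true),2); ((true,false,true,2,false,false),2); ((true,false,true,2,false,true),1); ((true,false,true,2,true,false),3); ((true,true,true,1,true,true),2); ((true,true,true,2,false,false),2); ((true,true,true,2,false,true),1); ((true,true,true,2,true,false),3); ((true,true,true,2,true,true),2)]);
  (5,0,[:: ((true,false,true,2,false,false),2); ((true,false,true,2,false,true),1); ((true,true,true,2,false,false),2); ((true,true,true,2,false,true),1)]);
  (5,0,[:: ((false,false,false,0,false,false),1); ((false,false,false,2,false,false),1); ((false,false,true,0,false,false),1); ((false,false,true,2,false,false),1); ((false,true,true,0,false,false),1); ((false,true,true,2,false,false),1); ((true,false,false,1,false,false),2); ((true,false,false,2,false,false),2); ((true,false,true,1,false,false),1); ((true,false,true,2,false,false),2); ((true,true,true,1,false,false),1); ((true,true,true,2,false,false),2)]);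
  (5,0,[:: ((false,false,false,0,false,false),0); ((false,false,false,2,false,false),0); ((false,false,false,2,true,false),0); ((false,false,true,0,false,false),1); ((false,false,true,2,false,false),1); ((false,true,true,0,false,false),1); ((false,true,true,2,false,false),1); ((false,true,true,2,true,false),1); ((true,false,false,1,false,false),1); ((true,false,false,2,false,false),1); ((true,false,true,1,false,false),2); ((true,false,true,1,true,true),1); ((true,false,true,2,false,false),2); ((true,false,true,2,true,false),2); ((true,true,true,1,false,false),2); ((true,true,true,1,true,true),1); ((true,true,true,2,false,false),2); ((true,true,true,2,true,false),2)]);
  (5,0,[:: ((false,false,false,0,false,false),0); ((false,false,false,2,false,false),0); ((false,false,true,0,false,false),1); ((false,false,true,2,false,false),1); ((false,true,true,0,false,false),1); ((false,true,true,2,false,false),1); ((true,false,false,1,false,false),1); ((true,false,false,2,false,false),1); ((true,false,true,1,false,false),2); ((true,false,true,2,false,false),2); ((true,true,true,1,false,false),2); ((true,true,true,2,false,false),2)]);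
  (5,0,[:: ((false,false,false,2,false,false),1); ((false,false,false,2,true,false),0); ((false,false,true,0,false,false),1); ((false,false,true,2,false,false),1); ((false,true,true,0,false,false),2); ((false,true,true,2,false,false),2); ((false,true,true,2,true,false),1); ((true,false,false,2,false,false),1); ((true,false,true,1,false,false),2); ((true,false,true,2,false,false),1); ((true,true,true,1,false,false),3); ((true,true,true,2,false,false),2)]);
  (5,0,[:: ((false,false,false,2,false,false),0); ((false,false,false,2,true,false),0); ((false,false,true,2,false,false),1); ((false,true,true,2,false,false),1); ((false,true,true,2,true,false),1); ((true,false,false,2,false,false),1); ((true,false,true,2,false,false),2); ((true,false,true,2,true,false),2); ((true,true,true,2,false,false),2); ((true,true,true,2,true,false),2)]);
  (5,0,[:: ((false,false,false,2,false,false),0); ((false,false,true,2,false,false),1); ((false,true,true,2,false,false),1); ((true,false,false,2,false,false),1); ((true,false,true,2,false,false),2); ((true,true,true,2,false,false),2)]);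
  (5,0,[:: ((false,false,false,2,true,false),2); ((false,false,true,0,false,false),0); ((false,false,true,2,false,false),1); ((false,true,true,0,false,false),1); ((false,true,true,2,false,false),2); ((false,true,true,2,true,false),1); ((true,false,false,2,false,false),3); ((true,false,true,1,false,false),1); ((true,false,true,2,false,false),1); ((true,true,true,1,false,false),2); ((true,true,true,2,false,false),2)]);
  (5,0,[:: ((false,false,false,2,false,false),2); ((false,false,true,2,false,false),1); ((false,true,true,2,false,false),2); ((false,true,true,2,true,false),1); ((true,false,false,2,false,false),3); ((true,false,true,2,false,false),1); ((true,true,true,2,false,false),2)]);
  (5,0,[:: ((false,true,true,2,false,false),1); ((false,true,true,2,true,false),1); ((true,false,true,1,true,true),1); ((true,false,true,2,false,false),2); ((true,false,true,2,false,true),2); ((true,false,true,2,true,false),2); ((true,true,true,1,true,true),1); ((true,true,true,2,false,false),2); ((true,true,true,2,false,true),2); ((true,true,true,2,true,false),2); ((true,true,true,2,true,true),1)]);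
  (5,0,[:: ((true,false,false,2,false,false),2); ((true,false,true,2,false,false),1); ((true,true,true,2,false,false),2)]);
  (5,0,[:: ((true,false,true,2,false,false),1); ((true,true,true,2,false,false),2)]);
  (5,0,[:: ((true,false,true,1,false,false),1); ((true,false,true,2,false,false),2); ((true,false,true,2,true,false),1); ((true,true,true,1,false,false),0); ((true,true,true,2,false,false),1); ((true,true,true,2,true,false),0)]);
  (5,0,[:: ((false,true,true,2,false,false),1); ((true,true,true,2,false,false),2); ((true,true,true,2,false,true),1)]);
  (5,0,[:: ((true,false,true,2,false,true),3); ((true,true,true,2,false,false),2); ((true,true,true,2,false,true),1)]);
  (5,0,[:: ((true,false,true,2,false,false),3); ((true,true,true,2,false,false),2); ((true,true,true,2,false,true),1)]);
  (5,0,[:: ((false,false,false,0,false,false),0); ((false,false,false,2,false,false),1); ((false,false,false,2,true,false),0); ((false,false,true,0,false,false),0); ((false,false,true,2,false,false),1); ((false,true,true,0,false,false),1); ((false,true,true,2,false,false),2); ((false,true,true,2,true,false),1); ((true,false,false,1,false,false),1); ((true,false,false,2,false,false),2); ((true,false,true,1,false,false),1); ((true,false,true,1,true,true),1); ((true,false,true,2,false,false),2); ((true,false,true,2,true,false),1); ((true,true,true,1,false,false),2); ((true,true,true,1,true,true),2); ((true,true,true,2,false,false),3); ((true,true,true,2,true,false),2)]);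
  (5,0,[:: ((false,false,false,0,false,false),2); ((false,false,false,2,false,false),2); ((false,false,true,0,false,false),2); ((false,false,true,2,false,false),2); ((false,true,true,0,false,false),1); ((false,true,true,2,false,false),1); ((true,false,false,1,false,false),3); ((true,false,false,2,false,false),3); ((true,false,true,1,false,false),1); ((true,false,true,2,false,false),2); ((true,true,true,1,false,false),0); ((true,true,true,2,false,false),1)]);
  (5,0,[:: ((true,true,true,2,false,false),2); ((true,true,true,2,false,true),1)]);
  (5,0,[:: ((false,false,false,0,false,false),0); ((false,false,false,2,false,false),1); ((false,false,false,2,true,false),0); ((false,false,true,0,false,false),1); ((false,false,true,2,false,false),2); ((false,true,true,0,false,false),1); ((false,true,true,2,false,false),2); ((false,true,true,2,true,false),1); ((true,false,false,1,false,false),1); ((true,false,false,2,false,false),1); ((true,false,true,1,false,false),1); ((true,false,true,1,true,true),1); ((true,false,true,2,false,false),2); ((true,false,true,2,true,false),2); ((true,true,true,1,false,false),1); ((true,true,true,1,true,true),1); ((true,true,true,2,false,false),2); ((true,true,true,2,true,false),2)]);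
  (5,0,[:: ((false,false,false,0,false,false),3); ((false,false,false,2,false,false),3); ((false,false,true,0,false,false),3); ((false,false,true,2,false,false),3); ((false,true,true,0,false,false),1); ((false,true,true,2,false,false),1); ((true,false,true,1,false,false),1); ((true,false,true,2,false,false),2); ((true,true,true,1,false,false),0); ((true,true,true,2,false,false),0)]);
  (5,0,[:: ((false,true,true,0,false,false),1); ((false,true,true,2,false,false),1); ((true,false,true,1,false,false),1); ((true,false,true,2,false,false),2); ((true,true,true,1,false,false),0); ((true,true,true,2,false,false),0)])].

(* [glue_index]'s entry (i, j) is the index of an entry of [certificate]
   covering the gluing of entries i and j. *)
Definition glue_index : seq (seq nat) := [:: [:: 1; 2; 6; 7; 8; 9; 24; 25; 26; 24; 8; 27; 13; 28; 29; 28; 8; 29; 30; 31; 31; 31; 31; 31; 39; 24; 24; 24; 24; 24; 25; 26; 8; 29; 29; 8; 34; 34; 31; 42; 8; 34; 24; 8; 8];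
  [:: 3; 4; 5; 10; 11; 10; 12; 5; 10; 5; 5; 20; 5; 5; 20; 5; 5; 20; 10; 20; 10; 20; 20; 20; 32; 12; 12; 10; 12; 12; 5; 10; 10; 20; 20; 5; 10; 20; 20; 5; 5; 20; 12; 5; 5];
  [:: 4; 13; 14; 15; 14; 13; 16; 13; 13; 13; 13; 17; 13; 14; 33; 14; 14; 33; 15; 34; 15; 34; 33; 33; 13; 13; 16; 13; 16; 16; 13; 13; 13; 33; 33; 14; 15; 34; 34; 13; 13; 34; 13; 13; 13];
  [:: 18; 19; 20; 19; 21; 19; 19; 19; 19; 19; 19; 20; 19; 20; 20; 20; 20; 20; 19; 20; 19; 20; 20; 20; 19; 19; 19; 19; 19; 19; 19; 19; 19; 20; 20; 20; 19; 20; 20; 19; 19; 20; 19; 19; 19];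
  [:: 19; 19; 19; 19; 19; 19; 19; 19; 19; 19; 19; 22; 19; 19; 23; 19; 19; 23; 19; 23; 19; 22; 23; 23; 19; 19; 19; 19; 19; 19; 19; 19; 19; 23; 23; 19; 19; 23; 23; 19; 19; 23; 19; 19; 19];
  [:: 20; 19; 20; 5; 21; 5; 5; 5; 5; 5; 5; 20; 5; 20; 20; 20; 20; 20; 5; 20; 5; 20; 20; 20; 5; 5; 5; 5; 5; 5; 5; 5; 5; 20; 20; 20; 5; 20; 20; 5; 5; 20; 5; 5; 5];
  [:: 5; 33; 29; 31; 33; 29; 31; 5; 28; 5; 29; 29; 31; 29; 29; 29; 29; 29; 31; 34; 31; 34; 29; 29; 28; 5; 5; 28; 31; 31; 5; 28; 31; 29; 29; 29; 34; 34; 34; 5; 29; 34; 5; 29; 29];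
  [:: 10; 15; 31; 34; 34; 31; 34; 10; 34; 10; 15; 31; 15; 31; 34; 31; 31; 34; 34; 34; 34; 34; 31; 31; 15; 10; 10; 34; 34; 34; 10; 34; 15; 34; 34; 31; 34; 34; 34; 10; 15; 34; 10; 15; 15];
  [:: 11; 14; 33; 34; 33; 14; 34; 8; 8; 8; 14; 33; 14; 33; 33; 33; 33; 33; 34; 34; 34; 34; 33; 33; 8; 5; 5; 8; 8; 8; 8; 8; 14; 33; 33; 33; 34; 34; 34; 8; 14; 34; 11; 14; 14];
  [:: 10; 13; 14; 31; 14; 29; 31; 8; 9; 8; 13; 29; 13; 14; 29; 14; 14; 29; 31; 31; 31; 31; 29; 29; 8; 8; 9; 9; 9; 9; 8; 9; 13; 29; 29; 14; 34; 31; 31; 8; 8; 34; 8; 13; 13];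
  [:: 19; 19; 5; 10; 11; 10; 10; 5; 10; 5; 5; 20; 5; 5; 20; 5; 5; 20; 10; 20; 10; 20; 20; 20; 5; 5; 5; 10; 10; 10; 5; 10; 10; 20; 20; 5; 10; 20; 20; 5; 5; 20; 5; 5; 5];
  [:: 21; 19; 21; 11; 23; 11; 11; 11; 11; 11; 11; 21; 11; 21; 21; 21; 21; 21; 11; 21; 11; 21; 21; 21; 11; 5; 5; 11; 5; 5; 11; 11; 11; 21; 21; 20; 11; 21; 21; 11; 5; 21; 11; 5; 5];
  [:: 19; 19; 5; 10; 11; 10; 12; 5; 10; 5; 5; 20; 5; 5; 20; 5; 5; 5; 10; 20; 10; 20; 5; 20; 12; 12; 12; 5; 12; 12; 5; 10; 5; 20; 20; 5; 10; 20; 20; 5; 5; 20; 12; 5; 5];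
  [:: 19; 13; 14; 15; 14; 13; 15; 13; 13; 13; 13; 17; 13; 14; 33; 14; 14; 33; 15; 34; 15; 34; 33; 33; 13; 13; 13; 13; 13; 13; 13; 13; 13; 33; 33; 14; 15; 34; 34; 13; 13; 34; 13; 13; 13];
  [:: 19; 14; 33; 34; 33; 14; 34; 14; 14; 14; 14; 33; 14; 33; 33; 33; 33; 33; 34; 34; 34; 34; 33; 33; 14; 14; 14; 14; 14; 14; 14; 14; 14; 33; 33; 33; 34; 34; 34; 14; 14; 34; 14; 14; 14];
  [:: 19; 15; 34; 15; 34; 15; 15; 15; 15; 15; 15; 34; 15; 34; 34; 34; 34; 34; 15; 34; 15; 34; 34; 34; 15; 15; 15; 15; 15; 15; 15; 15; 15; 34; 34; 34; 15; 34; 34; 15; 15; 34; 15; 15; 15];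
  [:: 19; 15; 34; 15; 34; 15; 35; 15; 15; 15; 15; 34; 15; 34; 34; 34; 34; 34; 15; 34; 15; 34; 34; 34; 15; 15; 16; 15; 16; 16; 15; 15; 15; 34; 34; 34; 15; 34; 34; 15; 15; 34; 15; 15; 15];
  [:: 22; 17; 33; 34; 33; 17; 34; 17; 17; 17; 17; 33; 14; 33; 33; 33; 33; 33; 34; 34; 34; 34; 33; 33; 17; 17; 17; 17; 17; 17; 17; 17; 17; 33; 33; 14; 34; 34; 34; 17; 14; 34; 17; 14; 14];
  [:: 36; 37; 36; 36; 37; 36; 36; 36; 36; 36; 36; 36; 36; 36; 36; 36; 36; 36; 36; 36; 36; 36; 36; 36; 36; 36; 36; 36; 36; 36; 36; 36; 36; 36; 36; 36; 36; 36; 36; 36; 36; 36; 36; 36; 36];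
  [:: 37; 19; 38; 19; 38; 19; 19; 19; 19; 19; 19; 38; 19; 38; 38; 38; 38; 38; 19; 38; 19; 38; 38; 38; 19; 19; 19; 19; 19; 19; 19; 19; 19; 38; 38; 38; 19; 38; 38; 19; 19; 38; 19; 19; 19];
  [:: 36; 38; 20; 20; 21; 20; 20; 20; 20; 20; 20; 20; 20; 20; 20; 20; 20; 20; 20; 20; 20; 20; 20; 20; 20; 20; 20; 20; 20; 20; 20; 20; 20; 20; 20; 20; 20; 20; 20; 20; 20; 20; 20; 20; 20];
  [:: 37; 38; 21; 21; 38; 21; 21; 21; 21; 21; 21; 21; 21; 21; 21; 21; 21; 21; 21; 21; 21; 21; 21; 21; 21; 20; 20; 21; 20; 20; 21; 21; 21; 21; 21; 20; 21; 21; 21; 21; 20; 21; 21; 20; 20];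
  [:: 37; 22; 23; 22; 23; 22; 19; 22; 22; 19; 22; 23; 19; 23; 23; 23; 23; 23; 22; 23; 22; 23; 23; 23; 22; 19; 19; 19; 19; 19; 22; 22; 22; 23; 23; 19; 22; 23; 23; 19; 19; 23; 19; 19; 19];
  [:: 37; 23; 23; 23; 23; 23; 23; 23; 23; 23; 23; 23; 23; 23; 23; 23; 23; 23; 23; 23; 23; 23; 23; 23; 23; 23; 23; 23; 23; 23; 23; 23; 23; 23; 23; 23; 23; 23; 23; 23; 23; 23; 23; 23; 23];
  [:: 12; 16; 8; 34; 14; 31; 40; 8; 24; 8; 8; 31; 13; 8; 33; 8; 8; 33; 34; 34; 34; 34; 31; 31; 16; 12; 12; 17; 24; 24; 8; 24; 13; 33; 33; 8; 34; 34; 34; 8; 8; 34; 12; 8; 8];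
  [:: 5; 13; 5; 10; 8; 9; 12; 5; 10; 5; 5; 20; 5; 5; 20; 5; 5; 20; 10; 20; 10; 20; 20; 20; 8; 5; 5; 10; 9; 9; 5; 10; 5; 20; 20; 5; 10; 20; 20; 5; 5; 20; 5; 5; 5];
  [:: 10; 13; 28; 34; 8; 9; 24; 10; 26; 10; 8; 27; 8; 28; 29; 28; 8; 29; 30; 31; 31; 31; 29; 29; 8; 8; 10; 24; 24; 24; 10; 26; 8; 29; 29; 8; 34; 31; 31; 10; 8; 34; 8; 8; 8];
  [:: 20; 17; 29; 31; 33; 29; 31; 17; 27; 17; 17; 29; 14; 29; 29; 29; 29; 29; 31; 34; 31; 34; 29; 29; 17; 17; 20; 27; 27; 27; 17; 27; 17; 29; 29; 14; 34; 34; 34; 17; 8; 34; 17; 14; 14];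
  [:: 5; 33; 29; 31; 33; 29; 31; 5; 28; 5; 29; 29; 31; 29; 29; 29; 29; 29; 31; 34; 31; 34; 29; 29; 28; 5; 5; 28; 28; 28; 5; 28; 31; 29; 29; 29; 34; 34; 34; 5; 29; 34; 5; 29; 29];
  [:: 20; 33; 29; 34; 33; 29; 33; 20; 29; 20; 29; 29; 33; 29; 29; 29; 29; 29; 34; 34; 34; 34; 29; 29; 29; 20; 20; 29; 29; 29; 20; 29; 33; 29; 29; 29; 34; 34; 34; 20; 29; 34; 20; 29; 29];
  [:: 10; 15; 31; 34; 34; 31; 34; 10; 30; 10; 15; 31; 15; 31; 34; 31; 31; 34; 34; 34; 34; 34; 31; 31; 15; 10; 10; 30; 30; 30; 10; 30; 15; 34; 34; 31; 34; 34; 34; 10; 15; 34; 10; 15; 15];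
  [:: 20; 34; 34; 34; 34; 31; 34; 20; 31; 20; 34; 34; 34; 34; 34; 34; 34; 34; 34; 34; 34; 34; 34; 34; 31; 20; 20; 31; 31; 31; 20; 31; 34; 34; 34; 34; 34; 34; 34; 20; 31; 34; 20; 31; 31];
  [:: 19; 19; 5; 5; 11; 5; 12; 5; 5; 5; 5; 20; 5; 5; 20; 5; 5; 20; 5; 20; 5; 20; 20; 20; 19; 12; 12; 5; 12; 12; 5; 5; 5; 20; 20; 5; 5; 20; 20; 5; 5; 20; 12; 5; 5];
  [:: 23; 33; 33; 34; 33; 33; 34; 23; 33; 23; 33; 33; 33; 33; 33; 33; 33; 33; 34; 34; 34; 34; 33; 33; 33; 23; 23; 33; 33; 33; 23; 33; 33; 33; 33; 33; 34; 34; 34; 23; 33; 34; 23; 33; 33];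
  [:: 23; 34; 34; 34; 34; 34; 34; 23; 34; 23; 34; 34; 34; 34; 34; 34; 34; 34; 34; 34; 34; 34; 34; 34; 34; 23; 23; 34; 34; 34; 23; 34; 34; 34; 34; 34; 34; 34; 34; 23; 34; 34; 23; 34; 34];
  [:: 19; 15; 34; 15; 34; 15; 35; 15; 15; 15; 15; 34; 15; 34; 34; 34; 34; 34; 15; 34; 15; 34; 34; 34; 15; 15; 19; 15; 35; 35; 15; 15; 15; 34; 34; 34; 15; 34; 34; 15; 15; 34; 15; 15; 15];
  [:: 36; 41; 36; 36; 41; 36; 36; 36; 36; 36; 36; 36; 36; 36; 36; 36; 36; 36; 36; 36; 36; 36; 36; 36; 36; 36; 36; 36; 36; 36; 36; 36; 36; 36; 36; 36; 36; 36; 36; 36; 36; 36; 36; 36; 36];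
  [:: 41; 37; 37; 37; 37; 37; 37; 37; 37; 37; 37; 37; 37; 37; 37; 37; 37; 37; 37; 37; 37; 37; 37; 37; 37; 37; 37; 37; 37; 37; 37; 37; 37; 37; 37; 37; 37; 37; 37; 37; 37; 37; 37; 37; 37];
  [:: 37; 38; 38; 38; 38; 38; 38; 37; 38; 37; 38; 38; 38; 38; 38; 38; 38; 38; 38; 38; 38; 38; 38; 38; 37; 37; 37; 37; 38; 38; 37; 38; 38; 38; 38; 38; 38; 38; 38; 37; 37; 38; 37; 37; 37];
  [:: 32; 13; 8; 15; 8; 8; 16; 8; 8; 8; 8; 17; 8; 8; 29; 8; 8; 29; 15; 31; 15; 31; 29; 29; 8; 8; 16; 8; 16; 16; 8; 8; 8; 29; 29; 5; 15; 31; 31; 8; 8; 34; 8; 5; 5];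
  [:: 12; 16; 34; 34; 34; 34; 43; 10; 34; 10; 15; 34; 15; 34; 34; 34; 34; 34; 34; 34; 34; 34; 34; 34; 12; 12; 12; 20; 40; 40; 10; 34; 15; 34; 34; 31; 34; 34; 34; 10; 12; 34; 12; 12; 12];
  [:: 41; 41; 41; 41; 41; 41; 41; 41; 41; 41; 41; 41; 41; 41; 41; 41; 41; 41; 41; 41; 41; 41; 41; 41; 41; 41; 41; 41; 41; 41; 41; 41; 41; 41; 41; 41; 41; 41; 41; 41; 41; 41; 41; 41; 41];
  [:: 5; 13; 5; 10; 8; 9; 12; 5; 10; 5; 5; 20; 5; 5; 20; 5; 5; 20; 10; 20; 10; 20; 20; 20; 8; 5; 5; 10; 9; 9; 5; 10; 8; 20; 20; 5; 10; 20; 20; 5; 5; 20; 5; 5; 5];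
  [:: 12; 35; 34; 34; 34; 34; 44; 10; 34; 10; 15; 34; 15; 34; 34; 34; 34; 34; 34; 34; 34; 34; 34; 34; 12; 12; 12; 20; 43; 43; 10; 34; 15; 34; 34; 34; 34; 34; 34; 10; 12; 34; 12; 12; 12];
  [:: 12; 35; 34; 34; 34; 34; 44; 10; 34; 10; 15; 34; 15; 34; 34; 34; 34; 34; 34; 34; 34; 34; 34; 34; 12; 12; 12; 20; 44; 44; 10; 34; 15; 34; 34; 34; 34; 34; 34; 10; 12; 34; 12; 12; 12]].

Definition closedb (F : seq (nat * nat * family)) (I : seq (seq nat)) : bool :=
  all (fun i => all (fun j =>
     let p1 := nth (0, 0, [::]) F i in
     let p2 := nth (0, 0, [::]) F j in
     let k := nth 0 (nth [::] I i) j in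
     let p := nth (0, 0, [::]) F k in
     [&& k < size F, p.1 == glue_shape p1.1 p2.1 & glue_covers p.2 p1.2 p2.2])
   (iota 0 (size F))) (iota 0 (size F)).

Lemma index_mem_iota (A : eqType) (x : A) s : x \in s -> index x s \in iota 0 (size s).
Proof. by rewrite mem_iota add0n index_mem. Qed.

Lemma closedbP F I t1 g1 t2 g2 : closedb F I -> (t1, g1) \in F -> (t2, g2) \in F ->
  exists g, (glue_shape t1 t2, g) \in F /\ glue_covers g g1 g2.
Proof.
move=> /allP cl in1 in2; have /allP := cl _ (index_mem_iota in1).
move=> /(_ _ (index_mem_iota in2)); rewrite !nth_index //=.
set p := nth _ F _ => /and3P [lt /eqP pE cov].
by exists p.2; rewrite -pE -surjective_pairing mem_nth.
Qed.

Lemma certificate_closed : closedb certificate glue_index.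
Proof. by vm_compute. Qed.

Definition complete_profile (s : profile) : bool :=
  let: (_, _, dm, k, tw, _) := s in [&& dm, k != 0 & ~~ tw].

(* Shapes of trees with at least 3 vertices other than P_4, rooted at a vertex
   of maximum degree. *)
Definition final_shape (t : nat * nat) : bool := (t.1 == 5) || (t.1 == 3) || (t == (4, 3)).

Definition finalb (F : seq (nat * nat * family)) : bool :=
  all (fun p => final_shape p.1 ==> has (fun q => complete_profile q.1 && (q.2 <= 1)) p.2) F.

Lemma finalbP F t g : finalb F -> (t, g) \in F -> final_shape t ->
  exists2 s, complete_profile s & exists2 b, (s, b) \in g & b <= 1.
Proof.
move=> /allP /[apply] /implyP /[apply] /hasP [[s b] sg /andP [cs b1]].
by exists s => //; exists b.
Qed.

Lemma certificate_final : finalb certificate.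
Proof. by vm_compute. Qed.

Lemma cardsU_disjoint (T : finType) (A B : {set T}) :
  [disjoint A & B] -> #|A :|: B| = #|A| + #|B|.
Proof. by move=> AB; case: (leq_card_setU A B) => _; rewrite AB => /eqP. Qed.

Lemma set1_neq0 (T : finType) (x : T) : [set x] != set0.
Proof. by apply/set0Pn; exists x; rewrite set11. Qed.

Section PartialSolutions.
Variables (T : finType) (e : rel T).
Hypothesis e_sym : symmetric e.
Local Notation N := (cnbhd e).

Lemma in_cnbhd x y : (y \in N x) = (y == x) || e x y.
Proof. by rewrite inE. Qed.

Lemma cnbhd_refl x : x \in N x.
Proof. by rewrite in_cnbhd eqxx. Qed.

Lemma cnbhd_sym x y : (x \in N y) = (y \in N x).
Proof. by rewrite !in_cnbhd eq_sym e_sym. Qed.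

Definition partial_solution (S : {set T}) (u : T) (C D : {set T}) : Prop :=
  [/\ C \subset S, D \subset S,
      {in S, forall x, x != u -> N x :&: D != set0},
      {in S, forall x, x != u -> N x :&: C != set0} &
      {in S &, forall x y, x != u -> y != u -> x != y -> N x :&: C != N y :&: C}].

Definition code_kind (A : {set T}) (u : T) : nat :=
  if A == set0 then 0 else if A == [set u] then 1 else 2.

Lemma code_kind0 A u : (code_kind A u == 0) = (A == set0).
Proof. by rewrite /code_kind; case: (A == set0) => //; case: (A == [set u]). Qed.

Lemma code_kind1 A u : (code_kind A u == 1) = (A == [set u]).
Proof.
rewrite /code_kind; case: (A =P set0) => [->|_] /=; last by case: (A == [set u]).
by rewrite [set0 == _]eq_sym (negbTE (set1_neq0 u)).
Qed.

Definition has_twin (S : {set T}) (u : T) (C : {set T}) : bool :=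
  [exists x in S, (x != u) && (N x :&: C == N u :&: C)].

Definition has_root_code (S : {set T}) (u : T) (C : {set T}) : bool :=
  [exists x in S, (x != u) && (N x :&: C == [set u])].

Definition profile_of (S : {set T}) (u : T) (C D : {set T}) : profile :=
  (u \in C, u \in D, N u :&: D != set0, code_kind (N u :&: C) u,
   has_twin S u C, has_root_code S u C).

Definition realizes (S : {set T}) (u : T) (s : profile) (b : nat) : Prop :=
  exists C D, [/\ partial_solution S u C D, profile_of S u C D = s
                & #|C| + #|D| + 1 <= #|S| + b].

Lemma realizes_singleton u s b : (s, b) \in singleton_family -> realizes [set u] u s b.
Proof.
have sol (C D : {set T}) : C \subset [set u] -> D \subset [set u] -> partial_solution [set u] u C D.
  by move=> sC sD; split=> // [x|x|x y]; rewrite ?inE => /eqP ->; rewrite ?eqxx.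
have no_other (P : pred T) : [exists x in [set u], (x != u) && P x] = false.
  by apply/existsP => -[x]; rewrite inE => /andP [/eqP ->]; rewrite eqxx.
have Nu0 : N u :&: set0 = set0 by rewrite setI0.
have Nu1 : N u :&: [set u] = [set u].
  by apply/setIidPr; rewrite sub1set cnbhd_refl.
have kind1 : code_kind [set u] u = 1 by rewrite /code_kind (negbTE (set1_neq0 u)) eqxx.
rewrite /singleton_family !inE => /or4P [] /eqP [-> ->]; [exists set0, set0 | exists set0, [set u]
  | exists [set u], set0 | exists [set u], [set u]].
all: split; [by apply: sol; rewrite ?sub0set | | by rewrite ?cards0 ?cards1].
all: by rewrite /profile_of /has_twin /has_root_code !no_other ?Nu0 ?Nu1 ?kind1
  ?inE ?eqxx ?set1_neq0 // /code_kind eqxx.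
Qed.

Section Attach.
Variables (S1 S2 : {set T}) (u c : T).
Hypothesis S12 : [disjoint S1 & S2].
Hypothesis uS1 : u \in S1.
Hypothesis cS2 : c \in S2.
Hypothesis e_uc : e u c.
Hypothesis S1_closed : {in S1, forall x, x != u -> N x \subset S1}.
Hypothesis S2_closed : {in S2, forall y, y != c -> N y \subset S2}.
Hypothesis Nc_sub : N c \subset u |: S2.

Lemma root_notin_S2 : (u \in S2) = false.
Proof. exact: disjointFr S12 uS1. Qed.

Lemma child_neq_root : (c == u) = false.
Proof. by apply: contraTF cS2 => /eqP ->; rewrite root_notin_S2. Qed.

Lemma setUI_left (A1 A2 : {set T}) : A1 \subset S1 -> A2 \subset S2 -> (A1 :|: A2) :&: S1 = A1.
Proof.
move=> sA1 sA2; rewrite setIUl (setIidPl sA1) disjoint_setI0 ?setU0 //.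
by rewrite disjoint_sym; apply: disjointWr sA2 S12.
Qed.

Lemma setUI_right (A1 A2 : {set T}) : A1 \subset S1 -> A2 \subset S2 -> (A1 :|: A2) :&: S2 = A2.
Proof.
move=> sA1 sA2; rewrite setIUl (setIidPl sA2) disjoint_setI0 ?set0U //.
exact: disjointWl sA1 S12.
Qed.

Lemma eq_setU_split (A1 A2 B1 B2 : {set T}) : A1 \subset S1 -> A2 \subset S2 ->
  B1 \subset S1 -> B2 \subset S2 -> (A1 :|: A2 == B1 :|: B2) = (A1 == B1) && (A2 == B2).
Proof.
move=> sA1 sA2 sB1 sB2; apply/eqP/andP => [E|[/eqP -> /eqP ->] //].
by split; apply/eqP; [rewrite -(setUI_left sA1 sA2) E setUI_left
                     | rewrite -(setUI_right sA1 sA2) E setUI_right].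
Qed.

Lemma cnbhdIU_left (A1 A2 : {set T}) x : A2 \subset S2 -> x \in S1 -> x != u ->
  N x :&: (A1 :|: A2) = N x :&: A1.
Proof.
move=> sA2 xS1 xu; rewrite setIUr [N x :&: A2]disjoint_setI0 ?setU0 //.
exact: disjointW (S1_closed xS1 xu) sA2 S12.
Qed.

Lemma cnbhdIU_right (A1 A2 : {set T}) y : A1 \subset S1 -> y \in S2 -> y != c ->
  N y :&: (A1 :|: A2) = N y :&: A2.
Proof.
move=> sA1 yS2 yc; rewrite setIUr [N y :&: A1]disjoint_setI0 ?set0U //.
by rewrite disjoint_sym; exact: disjointW sA1 (S2_closed yS2 yc) S12.
Qed.

Lemma cnbhdIU_child (A1 A2 : {set T}) : A1 \subset S1 ->
  N c :&: (A1 :|: A2) = (if u \in A1 then [set u] else set0) :|: N c :&: A2.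
Proof.
move=> sA1; rewrite setIUr; congr (_ :|: _).
have uNc : u \in N c by rewrite cnbhd_sym in_cnbhd e_uc orbT.
apply/setP=> z; rewrite inE; apply/andP/idP => [[zN zA1]|].
  have /setU1P [zu|zS2] := subsetP Nc_sub z zN; first by rewrite -zu zA1 inE.
  by rewrite (disjointFr S12 (subsetP sA1 z zA1)) in zS2.
by case: ifP => uA1; rewrite inE // => /eqP ->.
Qed.

Lemma cnbhdIU_root (A1 A2 : {set T}) : A2 \subset S2 ->
  N u :&: (A1 :|: A2) = N u :&: A1 :|: (if c \in A2 then [set c] else set0).
Proof.
move=> sA2; rewrite setIUr; congr (_ :|: _).
have cNu : c \in N u by rewrite in_cnbhd e_uc orbT.
apply/setP=> z; rewrite inE; apply/andP/idP => [[zN zA2]|].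
  have zS2 := subsetP sA2 z zA2; case: (z =P c) => [zc|/eqP zc].
    by rewrite -zc zA2 inE.
  by have := subsetP (S2_closed zS2 zc) u; rewrite cnbhd_sym zN root_notin_S2 => /(_ isT).
by case: ifP => cA2; rewrite inE // => /eqP ->.
Qed.

Lemma root_notin_sub (A2 : {set T}) : A2 \subset S2 -> (u \in A2) = false.
Proof. by move=> sA2; apply: contraFF (subsetP sA2 u) root_notin_S2. Qed.

Lemma eq_setU_splitl (A1 A2 B : {set T}) : A1 \subset S1 -> A2 \subset S2 ->
  B \subset S1 -> (A1 :|: A2 == B) = (A1 == B) && (A2 == set0).
Proof. by move=> sA1 sA2 sB; rewrite -(eq_setU_split sA1 sA2 sB (sub0set _)) setU0. Qed.

Lemma eq_setU_splitr (A1 A2 B : {set T}) : A1 \subset S1 -> A2 \subset S2 ->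
  B \subset S2 -> (A1 :|: A2 == B) = (A1 == set0) && (A2 == B).
Proof. by move=> sA1 sA2 sB; rewrite -(eq_setU_split sA1 sA2 (sub0set _) sB) set0U. Qed.

Lemma cnbhdIU_child_neq0 (A1 A2 : {set T}) : A1 \subset S1 ->
  (N c :&: (A1 :|: A2) != set0) = (u \in A1) || (N c :&: A2 != set0).
Proof.
by move=> sA1; rewrite cnbhdIU_child // setU_eq0 negb_and; case: ifP; rewrite ?set1_neq0 ?eqxx.
Qed.

Section AttachPairs.
Variables (C1 D1 C2 D2 : {set T}).
Hypothesis sol1 : partial_solution S1 u C1 D1.
Hypothesis sol2 : partial_solution S2 c C2 D2.

Local Notation U := (if u \in C1 then [set u] else set0).

Lemma sub_root_code : U \subset S1.
Proof. by case: ifP; rewrite ?sub1set ?sub0set. Qed.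

Lemma sub_cnbhdI1 x : N x :&: C1 \subset S1.
Proof. by case: sol1 => sC1 _ _ _ _; apply: subset_trans (subsetIr _ _) sC1. Qed.

Lemma sub_cnbhdI2 x : N x :&: C2 \subset S2.
Proof. by case: sol2 => sC2 _ _ _ _; apply: subset_trans (subsetIr _ _) sC2. Qed.

Lemma attach_separates_sides x y :
  (u \in C1 -> N c :&: C2 = set0 -> ~~ has_root_code S1 u C1) ->
  x \in S1 -> x != u -> y \in S2 -> N x :&: (C1 :|: C2) != N y :&: (C1 :|: C2).
Proof.
case: sol1 => sC1 _ _ cod1 _; case: sol2 => sC2 _ _ _ _ root_c xS1 xu yS2.
rewrite cnbhdIU_left //; have [->|yc] := eqVneq y c.
  rewrite eq_sym cnbhdIU_child // (eq_setU_splitl sub_root_code (sub_cnbhdI2 c) (sub_cnbhdI1 x)).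
  apply/negP => /andP [/eqP U_eq /eqP Nc0].
  have uC1 : u \in C1 by move: (cod1 x xS1 xu); rewrite -U_eq; case: (u \in C1); rewrite ?eqxx.
  by move/negP: (root_c uC1 Nc0); apply; apply/existsP; exists x; rewrite xS1 xu -U_eq uC1 eqxx.
rewrite cnbhdIU_right //; apply: contra (cod1 x xS1 xu) => /eqP E.
by rewrite -subset0 -(disjoint_setI0 S12) subsetI sub_cnbhdI1 E sub_cnbhdI2.
Qed.

Lemma attach_separates_child z : (u \notin C1 -> ~~ has_twin S2 c C2) ->
  z \in S2 -> z != c -> N c :&: (C1 :|: C2) != N z :&: (C1 :|: C2).
Proof.
case: sol1 => sC1 _ _ _ _ twin_c zS2 zc.
rewrite cnbhdIU_child // cnbhdIU_right // -[N z :&: C2]set0U.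
rewrite (eq_setU_split sub_root_code (sub_cnbhdI2 c) (sub0set _) (sub_cnbhdI2 z)).
apply/negP => /andP [U0 /eqP E].
have uC1 : u \notin C1 by move: U0; case: (u \in C1); rewrite ?(negbTE (set1_neq0 u)).
by move/negP: (twin_c uC1); apply; apply/existsP; exists z; rewrite zS2 zc E eqxx.
Qed.

Lemma attach_partial_solution :
  (u \in D1) || (N c :&: D2 != set0) -> (u \in C1) || (N c :&: C2 != set0) ->
  (u \notin C1 -> ~~ has_twin S2 c C2) ->
  (u \in C1 -> N c :&: C2 = set0 -> ~~ has_root_code S1 u C1) ->
  partial_solution (S1 :|: S2) u (C1 :|: C2) (D1 :|: D2).
Proof.
move=> dom_c code_c twin_c root_c.
case: sol1 => sC1 sD1 dom1 cod1 sep1; case: sol2 => sC2 sD2 dom2 cod2 sep2.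
split; [exact: setUSS | exact: setUSS | | |].
- move=> x /setUP [xS1|xS2] xu; first by rewrite cnbhdIU_left // dom1.
  have [->|xc] := eqVneq x c; first by rewrite cnbhdIU_child_neq0.
  by rewrite cnbhdIU_right // dom2.
- move=> x /setUP [xS1|xS2] xu; first by rewrite cnbhdIU_left // cod1.
  have [->|xc] := eqVneq x c; first by rewrite cnbhdIU_child_neq0.
  by rewrite cnbhdIU_right // cod2.
move=> x y /setUP [xS1|xS2] /setUP [yS1|yS2] xu yu xy.
- by rewrite !cnbhdIU_left // sep1.
- exact: attach_separates_sides.
- by rewrite eq_sym attach_separates_sides.
have [xc|xc] := eqVneq x c; have [yc|yc] := eqVneq y c.
- by rewrite xc yc eqxx in xy.
- by rewrite xc attach_separates_child.
- by rewrite yc eq_sym attach_separates_child.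
by rewrite !cnbhdIU_right // sep2.
Qed.

Lemma attach_dominated :
  (N u :&: (D1 :|: D2) != set0) = (N u :&: D1 != set0) || (c \in D2).
Proof.
case: sol2 => _ sD2 _ _ _; rewrite cnbhdIU_root // setU_eq0 negb_and.
by case: (c \in D2); rewrite ?set1_neq0 ?orbT ?eqxx ?orbF.
Qed.

Lemma attach_code_kind : code_kind (N u :&: (C1 :|: C2)) u =
  if c \in C2 then 2 else code_kind (N u :&: C1) u.
Proof.
case: sol2 => sC2 _ _ _ _; rewrite cnbhdIU_root //; case: ifP => cC2; last by rewrite setU0.
rewrite /code_kind setU_eq0 (negbTE (set1_neq0 c)) andbF.
by case: eqP => // /setP /(_ c); rewrite !inE eqxx orbT child_neq_root.
Qed.

Lemma attach_has_root_code : has_root_code (S1 :|: S2) u (C1 :|: C2) =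
  has_root_code S1 u C1 || (u \in C1) && (N c :&: C2 == set0).
Proof.
have [sC1 _ _ _ _] := sol1; have [sC2 _ _ _ _] := sol2.
apply/existsP/orP.
  case=> x /and3P [/setUP [xS1|xS2] xu E].
    by left; apply/existsP; exists x; rewrite xS1 xu -(cnbhdIU_left C1 sC2).
  have [xc|xc] := eqVneq x c; last first.
    move: E; rewrite cnbhdIU_right // => /eqP Ex.
    by have := subsetP (sub_cnbhdI2 x) u; rewrite Ex set11 root_notin_S2 => /(_ isT).
  move: E; rewrite xc cnbhdIU_child //.
  rewrite (eq_setU_splitl sub_root_code (sub_cnbhdI2 c)) ?sub1set // => /andP [U1 ->].
  by right; move: U1; case: ifP; rewrite // eq_sym (negbTE (set1_neq0 u)).
case=> [/existsP [x /and3P [xS1 xu E]]|/andP [uC1 /eqP Nc0]].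
  by exists x; rewrite in_setU xS1 xu cnbhdIU_left.
by exists c; rewrite in_setU cS2 orbT child_neq_root cnbhdIU_child // uC1 Nc0 setU0 /=.
Qed.

Lemma attach_has_twin_in : c \in C2 -> has_twin (S1 :|: S2) u (C1 :|: C2) =
  [|| (code_kind (N u :&: C1) u == 0) && (code_kind (N c :&: C2) c == 1),
      (code_kind (N u :&: C1) u == 1) && (code_kind (N c :&: C2) c == 1)
    | (code_kind (N u :&: C1) u == 0) && has_root_code S2 c C2].
Proof.
have [sC1 _ _ _ _] := sol1; case: sol2 => sC2 _ _ _ _ cC2.
rewrite !code_kind0 !code_kind1.
have c1 : [set c] \subset S2 by rewrite sub1set.
rewrite /has_twin cnbhdIU_root // cC2; apply/existsP/or3P.
  case=> x /and3P [/setUP [xS1|xS2] xu].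
    rewrite cnbhdIU_left // -[N x :&: C1]setU0.
    rewrite (eq_setU_split (sub_cnbhdI1 x) (sub0set _) (sub_cnbhdI1 u) c1).
    by rewrite [set0 == _]eq_sym (negbTE (set1_neq0 c)) andbF.
  have [{xu}->|xc] := eqVneq x c.
    rewrite cnbhdIU_child // (eq_setU_split sub_root_code (sub_cnbhdI2 c) (sub_cnbhdI1 u) c1).
    by case: ifP => _ /andP [/eqP <- ->]; rewrite eqxx; [constructor 2 | constructor 1].
  rewrite cnbhdIU_right // eq_sym (eq_setU_splitr (sub_cnbhdI1 u) c1 (sub_cnbhdI2 x)).
  move=> /andP [Nu0 /eqP E]; constructor 3; rewrite Nu0.
  by apply/existsP; exists x; rewrite xS2 xc -E eqxx.
have uC1 P : N u :&: C1 == P -> (u \in C1) = (u \in P).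
  by move=> /eqP <-; rewrite inE cnbhd_refl.
case=> [/andP [Nu0 Nc1]|/andP [Nu1 Nc1]|/andP [Nu0 /existsP [x /and3P [xS2 xc /eqP E]]]].
- exists c; rewrite in_setU cS2 orbT child_neq_root cnbhdIU_child // (eqP Nc1) (eqP Nu0).
  by rewrite (uC1 _ Nu0) in_set0 eqxx.
- exists c; rewrite in_setU cS2 orbT child_neq_root cnbhdIU_child // (eqP Nc1) (eqP Nu1).
  by rewrite (uC1 _ Nu1) set11 eqxx.
have xu : x != u by apply: contraTneq xS2 => ->; rewrite root_notin_S2.
by exists x; rewrite in_setU xS2 orbT xu cnbhdIU_right // E (eqP Nu0) set0U eqxx.
Qed.

Lemma attach_has_twin_notin : (u \in C1) || (N c :&: C2 != set0) -> c \notin C2 ->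
  has_twin (S1 :|: S2) u (C1 :|: C2) =
  has_twin S1 u C1 || [&& code_kind (N u :&: C1) u == 1, N c :&: C2 == set0 & u \in C1].
Proof.
have [sC1 _ _ _ _] := sol1; case: sol2 => sC2 _ _ cod2 _ code_c /negbTE cC2.
rewrite code_kind1 /has_twin cnbhdIU_root // cC2 setU0; apply/existsP/orP.
  case=> x /and3P [/setUP [xS1|xS2] xu].
    by rewrite cnbhdIU_left // => E; left; apply/existsP; exists x; rewrite xS1 xu.
  have [{xu}->|xc] := eqVneq x c.
    rewrite cnbhdIU_child // (eq_setU_splitl sub_root_code (sub_cnbhdI2 c) (sub_cnbhdI1 u)).
    move=> /andP [U_eq Nc0]; rewrite Nc0 in code_c; rewrite orbF in code_c.
    by right; rewrite -(eqP U_eq) code_c eqxx Nc0.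
  rewrite cnbhdIU_right // -[N x :&: C2]set0U -[N u :&: C1]setU0.
  rewrite (eq_setU_split (sub0set _) (sub_cnbhdI2 x) (sub_cnbhdI1 u) (sub0set _)).
  by rewrite (negbTE (cod2 x xS2 xc)) andbF.
case=> [/existsP [x /and3P [xS1 xu E]]|/and3P [/eqP Nu1 /eqP Nc0 uC1]].
  by exists x; rewrite in_setU xS1 xu cnbhdIU_left.
by exists c; rewrite in_setU cS2 orbT child_neq_root cnbhdIU_child // Nc0 Nu1 uC1 setU0 /=.
Qed.

Lemma attach_profile s :
  glue_profile (profile_of S1 u C1 D1) (profile_of S2 c C2 D2) = Some s ->
  partial_solution (S1 :|: S2) u (C1 :|: C2) (D1 :|: D2) /\
  profile_of (S1 :|: S2) u (C1 :|: C2) (D1 :|: D2) = s.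
Proof.
rewrite /glue_profile /profile_of.
case: ifP => // /negbFE dom_c; case: ifP => // /negbFE; rewrite code_kind0 => code_c.
case: ifP => // twin_c; case: ifP => // root_c [<-].
case: sol2 => sC2 sD2 _ _ _; split.
  apply: attach_partial_solution; rewrite 1?orbC //.
    by move=> uC1; move: twin_c; rewrite uC1 /= => ->.
  by move=> uC1 Nc0; move: root_c; rewrite Nc0 uC1 eqxx /= => ->.
congr (_, _, _, _, _, _).
- by rewrite in_setU (root_notin_sub sC2) orbF.
- by rewrite in_setU (root_notin_sub sD2) orbF.
- exact: attach_dominated.
- exact: attach_code_kind.
- case: ifP => cC2; first exact: attach_has_twin_in.
  by rewrite attach_has_twin_notin ?cC2 1?orbC.
- exact: attach_has_root_code.
Qed.

End AttachPairs.

Lemma attach_realizes s1 s2 s b1 b2 b : realizes S1 u s1 b1 -> realizes S2 c s2 b2 ->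
  glue_profile s1 s2 = Some s -> b1 + b2 <= b + 1 -> realizes (S1 :|: S2) u s b.
Proof.
move=> [C1 [D1 [sol1 <- size1]]] [C2 [D2 [sol2 <- size2]]] /(attach_profile sol1 sol2).
case=> sol E b12; exists (C1 :|: C2), (D1 :|: D2); split=> //.
case: sol1 => sC1 sD1 _ _ _; case: sol2 => sC2 sD2 _ _ _.
rewrite !cardsU_disjoint ?(disjointW sC1 sC2) ?(disjointW sD1 sD2) //.
by move: size1 size2 b12; lia.
Qed.

Definition achievable (S : {set T}) (u : T) (t : nat * nat) : Prop :=
  exists2 g, (t, g) \in certificate & forall s b, (s, b) \in g -> realizes S u s b.

Lemma achievable_attach t1 t2 : achievable S1 u t1 -> achievable S2 c t2 ->
  achievable (S1 :|: S2) u (glue_shape t1 t2).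
Proof.
move=> [g1 in1 real1] [g2 in2 real2].
have [g [in_g cov]] := closedbP certificate_closed in1 in2.
exists g => // s b sb.
have /hasP [[s1 b1] p1 /hasP [[s2 b2] p2 /andP [/eqP glue12 b12]]] := allP cov _ sb.
exact: attach_realizes (real1 _ _ p1) (real2 _ _ p2) glue12 b12.
Qed.

End Attach.

Lemma achievable_singleton u : achievable [set u] u (1, 0).
Proof. by exists singleton_family; [exact: mem_head | exact: realizes_singleton]. Qed.

Lemma achievable_solution u t : final_shape t -> achievable [set: T] u t ->
  exists C D, [/\ identifying e C, dominating e D & #|C| + #|D| <= #|T|].
Proof.
move=> final [g in_g real].
have [s complete [b sg b_le1]] := finalbP certificate_final in_g final.
have [C [D [[_ _ dom cod sep] s_eq size_CD]]] := real _ _ sg.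
move: complete; rewrite -s_eq /= => /and3P [dom_u /negP code_u no_twin].
rewrite code_kind0 in code_u.
exists C, D; split.
- apply/andP; split.
    by apply/forallP => v; have [->|vu] := eqVneq v u; [apply/negP | apply: cod].
  apply/forallP => x; apply/forallP => y; apply/implyP => xy.
  have [xu|xu] := eqVneq x u; have [yu|yu] := eqVneq y u.
  + by rewrite xu yu eqxx in xy.
  + apply: contra no_twin => /eqP E; apply/existsP; exists y.
    by rewrite in_setT yu -E xu eqxx.
  + apply: contra no_twin => /eqP E; apply/existsP; exists x.
    by rewrite in_setT xu E yu eqxx.
  + exact: sep.
- by apply/forallP => v; have [->|vu] := eqVneq v u; [| apply: dom].
- by rewrite -(leq_add2r 1) (leq_trans size_CD) // cardsT leq_add2l.
Qed.
End PartialSolutions.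

Definition degree (T : finType) (e : rel T) (v : T) : nat := #|[set w | e v w]|.

Section RootedTree.
Variables (T : finType) (e : rel T).
Hypothesis e_tree : is_tree e.
Variable r : T.

Let e_sym : symmetric e := proj1 (proj1 e_tree).
Let e_irr : irreflexive e := proj2 (proj1 e_tree).
Let e_conn : connected_graph e := proj1 (proj2 (proj2 e_tree)).
Let e_edges : nedges e = #|T| - 1 := proj2 (proj2 (proj2 e_tree)).
Let T_gt0 : 0 < #|T| := proj1 (proj2 e_tree).

Local Notation N := (cnbhd e).

Fixpoint layer (k : nat) : {set T} :=
  if k is k'.+1 then [set y | [exists x in layer k', e x y]] else [set r].

Lemma layer_path x p j : x \in layer j -> path e x p -> last x p \in layer (j + size p).
Proof.
elim: p x j => [|y p IH] x j /=; first by rewrite addn0.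
move=> xj /andP [exy yp]; rewrite addnS -addSn; apply: IH yp.
by rewrite inE; apply/existsP; exists x; rewrite xj.
Qed.

Lemma exists_layer v : exists k, v \in layer k.
Proof.
have /connectP [p rp ->] := e_conn r v.
by exists (size p); rewrite -[size p]add0n; apply: layer_path; rewrite ?set11.
Qed.

Definition depth (v : T) : nat := ex_minn (exists_layer v).

Lemma depth_layer v : v \in layer (depth v).
Proof. by rewrite /depth; case: ex_minnP. Qed.

Lemma depth_min v k : v \in layer k -> depth v <= k.
Proof. by rewrite /depth; case: ex_minnP => m _; apply. Qed.

Lemma depth_eq0 v : (depth v == 0) = (v == r).
Proof.
apply/eqP/eqP => [d0|->]; first by have := depth_layer v; rewrite d0 inE => /eqP.
by apply/eqP; rewrite -leqn0 depth_min ?set11.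
Qed.

Lemma depth_edge x y : e x y -> depth y <= (depth x).+1.
Proof.
by move=> exy; apply: depth_min; rewrite inE; apply/existsP; exists x; rewrite depth_layer.
Qed.

Definition parent (v : T) : T := odflt r [pick x | e v x && ((depth x).+1 == depth v)].

Lemma parentP v : v != r -> e v (parent v) /\ depth v = (depth (parent v)).+1.
Proof.
rewrite -depth_eq0 /parent; case: pickP => [x /andP [evx /eqP <-] //|no_parent].
have := depth_layer v; case dv: (depth v) => [|k] // + _.
rewrite inE => /existsP [x /andP [xk exv]].
have := no_parent x; rewrite e_sym exv dv /= eqSS eqn_leq depth_min //=.
by have := depth_edge exv; rewrite dv ltnS => ->.
Qed.

Lemma depth_parent v : v != r -> depth v = (depth (parent v)).+1.
Proof. by case/parentP. Qed.

Definition parent_pairs : {set T * T} :=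
  [set (v, parent v) | v in [set~ r]] :|: [set (parent v, v) | v in [set~ r]].

Lemma mem_parent_pairs a b : ((a, b) \in parent_pairs) =
  ((a != r) && (parent a == b)) || ((b != r) && (parent b == a)).
Proof.
rewrite in_setU; congr (_ || _); apply/imsetP/andP.
- by case=> v; rewrite in_setC1 => vr [-> ->].
- by case=> ar /eqP <-; exists a; rewrite ?in_setC1.
- by case=> v; rewrite in_setC1 => vr [-> ->].
- by case=> br /eqP <-; exists b; rewrite ?in_setC1.
Qed.

Lemma card_parent_pairs : #|parent_pairs| = (#|T|.-1).*2.
Proof.
rewrite cardsU_disjoint ?card_imset ?cardsC1 ?addnn // => [v w [] //|v w [] //|].
apply/pred0P => -[a b] /=; apply/andP => -[/imsetP [v vr [-> ->]] /imsetP [w wr [vw wv]]].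
rewrite in_setC1 in vr; rewrite in_setC1 in wr.
by have := depth_parent vr; have := depth_parent wr; rewrite -vw wv; lia.
Qed.

(* The 2(n - 1) ordered parent pairs already exhaust the ordered edges. *)
Lemma edge_parent x y : e x y -> (x, y) \in parent_pairs.
Proof.
move=> exy; apply/negPn/negP => xy_out.
have yx_out : (y, x) \notin parent_pairs by rewrite mem_parent_pairs orbC -mem_parent_pairs.
have xy_yx : (x, y) != (y, x) by apply: contraTneq exy => -[->]; rewrite e_irr.
have sub : (x, y) |: ((y, x) |: parent_pairs) \subset [set p | e p.1 p.2].
  apply/subsetP => -[a b]; rewrite !in_setU1 mem_parent_pairs inE /=.
  case/or3P => [/eqP [-> ->] //|/eqP [-> ->]|]; first by rewrite e_sym.
  by case/orP => /andP [/parentP [? _] /eqP <-]; rewrite // e_sym.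
have := subset_leq_card sub; rewrite !cardsU1 in_setU1 negb_or xy_yx xy_out yx_out.
by move: e_edges; rewrite /nedges card_parent_pairs -mul2n /=; lia.
Qed.

Lemma depth_iter j w : j <= depth w -> depth (iter j parent w) = depth w - j.
Proof.
elim: j => [|j IH] jw; first by rewrite subn0.
have dj : depth (iter j parent w) = depth w - j by apply: IH; lia.
have jr : iter j parent w != r by rewrite -depth_eq0 dj; lia.
by rewrite iterS; have := depth_parent jr; lia.
Qed.

Definition subtree (c : T) : {set T} :=
  [set w | (depth c <= depth w) && (iter (depth w - depth c) parent w == c)].

Definition children (c : T) : {set T} := [set y | (y != r) && (parent y == c)].

Lemma subtree_refl c : c \in subtree c.
Proof. by rewrite inE leqnn subnn eqxx. Qed.

Lemma subtree_depth c w : w \in subtree c -> depth c <= depth w.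
Proof. by rewrite inE => /andP []. Qed.

Lemma subtree_parent c w : w \in subtree c -> w != c -> (w != r) /\ (parent w \in subtree c).
Proof.
rewrite inE => /andP [cw /eqP iter_w] wc.
have lt_cw : depth c < depth w.
  by rewrite ltn_neqAle cw andbT; apply: contraNneq wc => cw'; rewrite -iter_w -cw' subnn.
have wr : w != r by rewrite -depth_eq0; lia.
split=> //; have dw := depth_parent wr; rewrite inE; apply/andP; split; first lia.
by rewrite -iterSr (_ : (depth (parent w) - depth c).+1 = depth w - depth c) ?iter_w //; lia.
Qed.

Lemma subtree_child c w y : w \in subtree c -> y \in children w -> y \in subtree c.
Proof.
rewrite !inE => /andP [cw /eqP iter_w] /andP [yr /eqP py].
have dy := depth_parent yr; rewrite py in dy.
apply/andP; split; first lia.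
by rewrite (_ : depth y - depth c = (depth w - depth c).+1) ?iterSr ?py ?iter_w //; lia.
Qed.

Lemma subtree_closed c w y : w \in subtree c -> w != c -> e w y -> y \in subtree c.
Proof.
move=> wc w_neq /edge_parent; rewrite mem_parent_pairs => /orP [/andP [wr /eqP <-]|yw].
  by case: (subtree_parent wc w_neq).
by apply: subtree_child wc _; rewrite inE.
Qed.

Lemma subtree_root_edge c y : e c y -> (y \in subtree c) || (y == parent c).
Proof.
move/edge_parent; rewrite mem_parent_pairs => /orP [/andP [_ /eqP <-]|yc].
  by rewrite eqxx orbT.
by rewrite (subtree_child (subtree_refl c)) // inE.
Qed.

Lemma parent_notin_subtree c : c != r -> parent c \notin subtree c.
Proof. by move=> cr; apply/negP => /subtree_depth; have := depth_parent cr; lia. Qed.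

Lemma subtree_sub y c : y \in children c -> subtree y \subset subtree c.
Proof.
rewrite inE => /andP [yr /eqP py]; apply/subsetP => w.
rewrite !inE => /andP [yw /eqP iter_w].
have dy := depth_parent yr; rewrite py in dy.
apply/andP; split; first lia.
by rewrite (_ : depth w - depth c = (depth w - depth y).+1) ?iterS ?iter_w ?py //; lia.
Qed.

Lemma subtree_disjoint v y z : y \in children v -> z \in children v -> y != z ->
  [disjoint subtree y & subtree z].
Proof.
rewrite !inE => /andP [yr /eqP py] /andP [zr /eqP pz] yz.
have dyz : depth y = depth z by rewrite (depth_parent yr) (depth_parent zr) py pz.
apply/pred0P => w /=; apply/negP; rewrite !inE dyz.
by move=> /andP [/andP [_ /eqP wy] /andP [_ /eqP wz]]; rewrite wy in wz; rewrite wz eqxx in yz.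
Qed.

Lemma subtree_decomp c : subtree c = c |: \bigcup_(y in children c) subtree y.
Proof.
apply/setP => w; apply/idP/idP; last first.
  case/setU1P => [->|/bigcupP [y yc wy]]; first exact: subtree_refl.
  exact: subsetP (subtree_sub yc) w wy.
move=> wc; have [->|w_neq] := eqVneq w c; first exact: setU11.
apply/setU1P; right; apply/bigcupP.
have := wc; rewrite inE => /andP [cw /eqP iter_w].
have lt_cw : depth c < depth w.
  by rewrite ltn_neqAle cw andbT; apply: contraNneq w_neq => cw'; rewrite -iter_w -cw' subnn.
set y := iter (depth w - depth c).-1 parent w.
have dy : depth y = (depth c).+1 by rewrite /y depth_iter; lia.
have yr : y != r by rewrite -depth_eq0 dy.
exists y.
  have pos : 0 < depth w - depth c by rewrite subn_gt0.
  by rewrite inE yr /y -iterS prednK // iter_w eqxx.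
rewrite inE dy; apply/andP; split; first lia.
by rewrite /y (_ : depth w - (depth c).+1 = (depth w - depth c).-1) //; lia.
Qed.

Lemma subtree_root : subtree r = [set: T].
Proof.
apply/setP => w; rewrite !inE (_ : depth r = 0) ?subn0 /=; last by apply/eqP; rewrite depth_eq0.
by rewrite -depth_eq0 depth_iter // subnn.
Qed.

Lemma subtree_cnbhd y : {in subtree y, forall x, x != y -> N x \subset subtree y}.
Proof.
move=> x xy x_neq; apply/subsetP => w; rewrite in_cnbhd => /orP [/eqP -> //|].
exact: subtree_closed.
Qed.

Lemma cnbhd_child y : y != r -> N y \subset parent y |: subtree y.
Proof.
move=> yr; apply/subsetP => w; rewrite in_cnbhd => /orP [/eqP ->|/subtree_root_edge].
  by rewrite setU1r ?subtree_refl.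
by case/orP => [wy|/eqP ->]; rewrite ?setU11 ?setU1r.
Qed.

Definition piece (v : T) (L : seq T) : {set T} := v |: \bigcup_(y <- L) subtree y.

Lemma piece_nil v : piece v [::] = [set v].
Proof. by rewrite /piece big_nil setU0. Qed.

Lemma piece_cons v y L : piece v (y :: L) = piece v L :|: subtree y.
Proof. by rewrite /piece big_cons setUCA setUC. Qed.

Lemma mem_piece v L w : (w \in piece v L) = (w == v) || has (fun y => w \in subtree y) L.
Proof.
rewrite /piece in_setU1; congr (_ || _); elim: L => [|y L IH]; first by rewrite big_nil inE.
by rewrite big_cons in_setU IH.
Qed.

Lemma subtree_piece c : subtree c = piece c (enum (children c)).
Proof. by rewrite /piece big_enum -subtree_decomp. Qed.

Lemma piece_cnbhd v L : {subset L <= children v} ->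
  {in piece v L, forall x, x != v -> N x \subset piece v L}.
Proof.
move=> sub_ch x; rewrite mem_piece => /orP [/eqP -> |/hasP [y yL xy]]; first by rewrite eqxx.
move=> x_neq; apply/subsetP => w wx; rewrite mem_piece; apply/orP.
have [x_eq|x_neq_y] := eqVneq x y; last first.
  by right; apply/hasP; exists y => //; apply: subsetP (subtree_cnbhd xy x_neq_y) w wx.
have := sub_ch y yL; rewrite inE => /andP [yr /eqP py].
rewrite x_eq in wx; have /setU1P [->|wy] := subsetP (cnbhd_child yr) w wx.
  by left; rewrite py.
by right; apply/hasP; exists y.
Qed.

Lemma piece_disjoint v y L : uniq (y :: L) -> {subset y :: L <= children v} ->
  [disjoint piece v L & subtree y].
Proof.
move=> /andP [yL _] sub_ch; have yc := sub_ch y (mem_head _ _).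
have vy : v \notin subtree y.
  by move: yc; rewrite inE => /andP [yr /eqP <-]; apply: parent_notin_subtree.
apply/pred0P => w /=; rewrite mem_piece; apply/negP => /andP [/orP [/eqP ->|/hasP [z zL wz]] wy].
  by rewrite wy in vy.
have zc : z \in children v by apply: sub_ch; rewrite inE zL orbT.
have zy : z != y by apply: contraNneq yL => <-.
by rewrite (disjointFr (subtree_disjoint zc yc zy) wz) in wy.
Qed.

Lemma achievable_piece v L : uniq L -> {subset L <= children v} ->
  (forall y, y \in L -> achievable e (subtree y) y (shape #|subtree y| #|children y|)) ->
  achievable e (piece v L) v (shape #|piece v L| (size L)).
Proof.
elim: L => [|y L IH] uL sub_ch ach_sub.
  by rewrite piece_nil cards1; apply: achievable_singleton.
have dis := piece_disjoint uL sub_ch.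
have := sub_ch y (mem_head _ _); rewrite inE => /andP [yr /eqP py].
have vL : v \in piece v L by rewrite mem_piece eqxx.
have e_vy : e v y by rewrite -py e_sym; case: (parentP yr).
have Ny : N y \subset v |: subtree y by rewrite -py cnbhd_child.
have sub_ch' : {subset L <= children v} by move=> z zL; apply: sub_ch; rewrite inE zL orbT.
rewrite piece_cons cardsU_disjoint // (shape_glue _ #|children y|); last 2 first.
- by apply/card_gt0P; exists v.
- by apply/card_gt0P; exists y; apply: subtree_refl.
apply: (achievable_attach e_sym dis vL (subtree_refl y) e_vy (piece_cnbhd sub_ch')
  (@subtree_cnbhd y) Ny).
  by apply: IH => // [|z zL]; [by case/andP: uL | apply: ach_sub; rewrite inE zL orbT].
exact: ach_sub (mem_head _ _).
Qed.

Lemma achievable_subtree v : achievable e (subtree v) v (shape #|subtree v| #|children v|).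
Proof.
have [n] := ubnP #|subtree v|; elim: n v => // n IH v /ltnSE size_v.
rewrite [#|children v|]cardE subtree_piece.
apply: achievable_piece => [|y|y]; rewrite ?enum_uniq ?mem_enum //.
move=> yc; apply: IH; apply: leq_trans size_v; apply/proper_card/properP.
split; first exact: subtree_sub.
exists v; first exact: subtree_refl.
by move: yc; rewrite inE => /andP [yr /eqP <-]; apply: parent_notin_subtree.
Qed.

Lemma achievable_root : achievable e [set: T] r (shape #|T| #|children r|).
Proof. by rewrite -cardsT -subtree_root; apply: achievable_subtree. Qed.

Lemma children_root : children r = [set w | e r w].
Proof.
apply/setP => w; rewrite !inE; apply/andP/idP => [[wr /eqP <-]|/edge_parent].
  by rewrite e_sym; case: (parentP wr).
by rewrite mem_parent_pairs eqxx => /andP [-> ->].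
Qed.

Lemma card_children_lt v : v != r -> #|children v| < degree e v.
Proof.
move=> vr; have pv : parent v \notin children v.
  rewrite inE; apply/andP => -[pr /eqP ppv].
  by have := depth_parent pr; rewrite ppv (depth_parent vr); lia.
have sub : parent v |: children v \subset [set w | e v w].
  apply/subsetP => w /setU1P [->|]; rewrite inE; first by case: (parentP vr).
  by rewrite inE => /andP [wr /eqP <-]; rewrite e_sym; case: (parentP wr).
by have := subset_leq_card sub; rewrite cardsU1 pv.
Qed.

Lemma depth_lt_card x : depth x < #|T|.
Proof.
pose f (j : 'I_(depth x).+1) := iter j parent x.
have f_inj : injective f.
  move=> i j /(congr1 depth); rewrite (depth_iter (ltn_ord i)) (depth_iter (ltn_ord j)).
  by move=> dij; apply: val_inj; move: (ltn_ord i) (ltn_ord j) dij => /=; lia.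
by have := leq_card f f_inj; rewrite card_ord.
Qed.

Lemma iso_P4_path : #|T| = 4 -> (forall v, #|children v| <= 1) -> iso_P4 e.
Proof.
move=> n4 ch1.
have depth_inj : injective depth.
  suff eq_depth k x y : depth x = k -> depth y = k -> x = y.
    by move=> x y dxy; apply: eq_depth dxy _.
  elim: k x y => [|k IH] x y dx dy.
    by move/eqP: dx; move/eqP: dy; rewrite !depth_eq0 => /eqP -> /eqP ->.
  have [xr yr] : x != r /\ y != r by rewrite -!depth_eq0 dx dy.
  have pxy : parent x = parent y.
    by apply: IH; apply: succn_inj; rewrite -?depth_parent.
  by apply: (card_le1_eqP (ch1 (parent y))); rewrite inE ?xr ?yr ?pxy eqxx.
have edge_depth a b : (depth a).+1 = depth b -> e a b.
  move=> dab; have br : b != r by rewrite -depth_eq0 -dab.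
  have <- : parent b = a by apply: depth_inj; apply: succn_inj; rewrite dab (depth_parent br).
  by rewrite e_sym; case: (parentP br).
pose f v : 'I_4 := inord (depth v).
have fE v : f v = depth v :> nat by rewrite inordK // -n4 depth_lt_card.
exists f; split.
  apply: inj_card_bij; last by rewrite card_ord n4.
  by move=> x y /(congr1 (@nat_of_ord 4)); rewrite !fE => /depth_inj.
move=> x y; rewrite !fE; apply/idP/idP => [/edge_parent|/orP [] /eqP]; last 2 first.
- exact: edge_depth.
- by move=> /edge_depth; rewrite e_sym.
by rewrite mem_parent_pairs => /orP [] /andP [nr /eqP <-]; rewrite (depth_parent nr) eqxx ?orbT.
Qed.

End RootedTree.

Section Tree.
Variables (T : finType) (e : rel T).
Hypothesis e_tree : is_tree e.

Lemma exists_leaf (r : T) : exists v, degree e v <= 1.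
Proof.
pose x := [arg max_(v > r) depth e_tree r v].
have x_max y : depth e_tree r y <= depth e_tree r x.
  by rewrite /x; case: arg_maxnP => // z _; apply.
exists x; rewrite /degree -(cards1 (parent e_tree r x)); apply/subset_leq_card/subsetP => y.
rewrite !inE => /(edge_parent e_tree r); rewrite mem_parent_pairs => /orP [/andP [_ /eqP ->] //|].
by case/andP => yr /eqP pyx; have := depth_parent e_tree yr; rewrite pyx; have := x_max y; lia.
Qed.

Lemma iso_P4_degree : #|T| = 4 -> (forall v, degree e v <= 2) -> iso_P4 e.
Proof.
move=> n4 deg2; have [r _] : exists r : T, r \in T by apply/card_gt0P; rewrite n4.
have [l leaf] := exists_leaf r; apply: (@iso_P4_path _ _ e_tree l) => // v.
have [->|vl] := eqVneq v l; first by rewrite children_root.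
by have := card_children_lt e_tree vl; have := deg2 v; lia.
Qed.

Lemma tree_code_dom : 3 <= #|T| -> ~ iso_P4 e ->
  exists C D, [/\ identifying e C, dominating e D & #|C| + #|D| <= #|T|].
Proof.
move=> n3 not_P4; have [x0 _] : exists x : T, x \in T by apply/card_gt0P; apply: leq_trans n3.
pose r := [arg max_(v > x0) degree e v].
have r_max v : degree e v <= degree e r by rewrite /r; case: arg_maxnP => // z _; apply.
apply: (achievable_solution (u := r) _ (achievable_root e_tree r)).
rewrite (children_root e_tree) -/(degree e r) /final_shape /shape.
have [//|n5] := leqP 5 #|T|.
have [->|n4] : #|T| = 3 \/ #|T| = 4 by lia.
  by [].
rewrite n4; have [//|deg2] := leqP 3 (degree e r).
by case: not_P4; apply: iso_P4_degree => // v; apply: leq_trans (r_max v) _; rewrite -ltnS.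
Qed.

End Tree.

Lemma gammaID_le (T : finType) (e : rel T) (C : {set T}) :
  identifying e C -> gammaID e <= #|C|.
Proof.
move=> idC; rewrite /gammaID; case: pickP => [C0 idC0|/(_ C)]; last by rewrite idC.
by case: arg_minnP => // C1 _; apply.
Qed.

Lemma gamma_le (T : finType) (e : rel T) (D : {set T}) :
  dominating e D -> gamma e <= #|D|.
Proof.
move=> domD; rewrite /gamma; case: arg_minnP => [|D1 _]; last exact.
by apply/forallP => v; apply/set0Pn; exists v; rewrite !inE eqxx.
Qed.

Theorem mainTheorem2 (T : finType) (e : rel T) :
  is_tree e -> 3 <= #|T| -> ~ iso_P4 e ->
  has_idcode e /\ gammaID e <= #|T| - gamma e.
Proof.
move=> e_tree n3 not_P4.
have [C [D [idC domD size_CD]]] := tree_code_dom e_tree n3 not_P4.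
split; first by apply/existsP; exists C.
by have := gammaID_le idC; have := gamma_le domD; lia.
Qed.
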